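(* In the setting of the previous statement (unitary $V$, $D=c_1I+c_2V$ with real $c_1,c_2$, unitary Arnoldi quantities $Q_k,L_k,U_k,l_{k+1,k}$, $T_k=c_1U_k+c_2L_k$ with nonsingular LU factorization, $z_k$ solving $T_kz_k=\|b\|_2e_1$, $\alpha_k=e_k^Tz_k$, and $x_k=Q_kU_kz_k$), let $\nu=c_2l_{k+1,k}$ and let $\tilde T_k$ be the $(k+1)\times k$ matrix obtained by appending the row $\nu e_k^T$ to $T_k$. Let $O_k$ be a $(k+1)\times(k+1)$ unitary matrix of the form $O_k=G_k\begin{pmatrix}O_{k-1}&0\\0&1\end{pmatrix}$ (with $O_0=1$), where $G_k$ acts as the identity on the first $k-1$ coordinates and as $\begin{pmatrix}c_k&s_k\\-\bar s_k&c_k\end{pmatrix}$ (with $c_k\ge0$ real, $c_k^2+|s_k|^2=1$) on coordinates $k,k+1$, chosen so that $O_k\tilde T_k=\begin{pmatrix}R_k\\0\end{pmatrix}$ with $R_k$ upper triangular; assume $R_k$ is nonsingular. Then the minimizer $$\tilde x_k=\arg\min_{x\in\mathrm{span}\{b,Db,\dots,D^{k-1}b\}}\|b-Dx\|_2$$ is given by $$\tilde x_k=x_k-\nu\alpha_ks_k\,Q_kU_kR_k^{-1}e_k .$$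
   Context: Unitary Arnoldi process: $q_1=b/\|b\|_2$, $q_0=0$, $v_0=0$, $u_{01}=0$; for $j=1,2,\dots$: $v_j=Vq_j$, $u_{j-1,j}=-(q_{j-1}^*v_j)/(q_{j-1}^*v_{j-1})$ for $j>1$, $l_{jj}=q_j^*v_j+u_{j-1,j}q_j^*v_{j-1}$, $\tilde q_{j+1}=v_j-l_{jj}q_j+u_{j-1,j}v_{j-1}$, $l_{j+1,j}=\|\tilde q_{j+1}\|_2$, $q_{j+1}=\tilde q_{j+1}/l_{j+1,j}$, assumed without breakdown. $Q_k=[q_1,\dots,q_k]$ (orthonormal columns); $L_k$ is $k\times k$ lower bidiagonal with diagonal $l_{jj}$ and subdiagonal $l_{j+1,j}$; $U_k$ is $k\times k$ upper bidiagonal with unit diagonal and superdiagonal $u_{j-1,j}$; $VQ_kU_k=Q_kL_k+l_{k+1,k}q_{k+1}e_k^T$. $e_j$ is the $j$-th standard unit vector. *)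

(* complex scalars in an abstract numClosedFieldType C
   (e.g. algC or R[i]). *)
From HB Require Import structures.
From mathcomp Require Import all_boot all_order all_algebra.
Set Implicit Arguments. Unset Strict Implicit. Unset Printing Implicit Defensive.
Import Order.TTheory GRing.Theory Num.Theory.
Local Open Scope ring_scope.

Section Defs.
Variable C : numClosedFieldType.

Definition ctr m n (A : 'M[C]_(m, n)) : 'M[C]_(n, m) := (map_mx Num.conj A)^T.

Definition cdot n (q v : 'cV[C]_n) : C := \sum_i (q i 0)^* * v i 0.

Definition norm2 n (v : 'cV[C]_n) : C := sqrtC (\sum_i `|v i 0| ^+ 2).

Definition unitary n (A : 'M[C]_n) : Prop := A *m ctr A = 1%:M.

(* standard unit column vectors e_1 and e_k (1-based) in C^k *)
Definition e1 k : 'cV[C]_k := \col_i ((i : nat) == 0%N)%:R.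
Definition elast k : 'cV[C]_k := \col_i ((i : nat) == k.-1)%:R.

(* ---------- one step of the unitary Arnoldi process ----------
   At step j (j >= 1), with qp = q_{j-1}, qc = q_j:
     v_j = V q_j, v_{j-1} = V q_{j-1}  (v_0 = 0 = V q_0 since q_0 = 0). *)
Section Step.
Variable n : nat.
Variable V : 'M[C]_n.

Definition ua_u (j : nat) (qp qc : 'cV[C]_n) : C :=
  if (j <= 1)%N then 0
  else - (cdot qp (V *m qc)) / (cdot qp (V *m qp)).

Definition ua_ldiag (j : nat) (qp qc : 'cV[C]_n) : C :=
  cdot qc (V *m qc) + ua_u j qp qc * cdot qc (V *m qp).

Definition ua_qtilde (j : nat) (qp qc : 'cV[C]_n) : 'cV[C]_n :=
  V *m qc - ua_ldiag j qp qc *: qc + ua_u j qp qc *: (V *m qp).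

Definition ua_lsub (j : nat) (qp qc : 'cV[C]_n) : C := norm2 (ua_qtilde j qp qc).

Definition ua_next (j : nat) (qp qc : 'cV[C]_n) : 'cV[C]_n :=
  (ua_lsub j qp qc)^-1 *: ua_qtilde j qp qc.

Variable b : 'cV[C]_n.

(* ua_pair j = (q_j, q_{j+1}), with q_0 = 0, q_1 = b / ||b|| *)
Fixpoint ua_pair (j : nat) : 'cV[C]_n * 'cV[C]_n :=
  match j with
  | 0 => (0, (norm2 b)^-1 *: b)
  | j'.+1 => let: (qp, qc) := ua_pair j' in (qc, ua_next j'.+1 qp qc)
  end.

Definition uq (j : nat) : 'cV[C]_n := (ua_pair j).1.
(* u_{j-1,j}, l_{jj}, l_{j+1,j} for j >= 1 *)
Definition uu (j : nat) : C := ua_u j (uq j.-1) (uq j).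
Definition ul (j : nat) : C := ua_ldiag j (uq j.-1) (uq j).
Definition ulsub (j : nat) : C := ua_lsub j (uq j.-1) (uq j).

Definition no_breakdown (k : nat) : Prop :=
  (forall j, (1 <= j <= k)%N -> ulsub j != 0) /\
  (forall j, (2 <= j <= k)%N -> cdot (uq j.-1) (V *m uq j.-1) != 0).

Definition Qk k : 'M[C]_(n, k) := \matrix_(i < n, j < k) uq j.+1 i 0.
Definition Lk k : 'M[C]_k := \matrix_(i < k, j < k)
  if (i : nat) == j then ul j.+1
  else if (i : nat) == j.+1 then ulsub j.+1 else 0.
Definition Uk k : 'M[C]_k := \matrix_(i < k, j < k)
  if (i : nat) == j then 1
  else if (j : nat) == i.+1 then uu j.+1 else 0.
End Step.

Definition upper_tri m k (A : 'M[C]_(m, k)) : Prop :=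
  forall (i : 'I_m) (j : 'I_k), (j < i)%N -> A i j = 0.
Definition lower_tri m k (A : 'M[C]_(m, k)) : Prop :=
  forall (i : 'I_m) (j : 'I_k), (i < j)%N -> A i j = 0.
Definition nonsingular_LU k (A : 'M[C]_k) : Prop :=
  exists (L U : 'M[C]_k),
    lower_tri L /\ upper_tri U /\ L \in unitmx /\ U \in unitmx /\ A = L *m U.

(* Givens rotation G_j of size (j+1): identity on coordinates 1..j-1,
   [[c, s], [-conj s, c]] on coordinates j, j+1 (1-based). *)
Definition givens j (c s : C) : 'M[C]_(j.+1) := \matrix_(a < j.+1, b < j.+1)
  if ((a : nat) == j.-1) && ((b : nat) == j.-1) then c
  else if ((a : nat) == j.-1) && ((b : nat) == j) then s
  else if ((a : nat) == j) && ((b : nat) == j.-1) then - s^*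
  else if ((a : nat) == j) && ((b : nat) == j) then c
  else ((a : nat) == b)%:R.

Definition diag_ext m (A : 'M[C]_m) : 'M[C]_(m.+1) :=
  castmx (addn1 m, addn1 m) (block_mx A 0 0 (1%:M : 'M[C]_1)).

Fixpoint Omat (c s : nat -> C) (j : nat) : 'M[C]_(j.+1) :=
  match j with
  | 0 => 1%:M
  | j'.+1 => givens j'.+1 (c j'.+1) (s j'.+1) *m diag_ext (Omat c s j')
  end.

Definition krylov n (D : 'M[C]_n) (b : 'cV[C]_n) (k : nat) (x : 'cV[C]_n) : Prop :=
  exists a : 'I_k -> C, x = \sum_(i < k) a i *: iter i (mulmx D) b.

End Defs.

(* The Arnoldi vectors q_1, ..., q_(k+1) are orthonormal. The coefficient
   u_(j-1,j) is chosen so that V w_j, where w_j = q_j + u_(j-1,j) q_(j-1) is the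
   j-th column of Q_k U_k, is orthogonal to q_(j-1); as V is unitary, every V^* q_i
   lies in span(V^* q_1, q_1, ..., q_(i-1)), and this propagates the single
   orthogonality relation to all earlier q_i. The Krylov space is contained in the
   range of Q_k U_k (with equality when c2 <> 0), the recurrence gives
   D Q_k U_k = Q_(k+1) Tt_k, and b = ||b|| Q_(k+1) e_1. As Q_(k+1) and O_k are
   isometries, ||b - D Q_k U_k a||^2 = ||g' - R_k a||^2 + |g_(k+1)|^2 where
   g = ||b|| O_k e_1 and g' is g without its last entry, which is minimal exactly
   at a = R_k^-1 g'. Finally Tt_k z_k = ||b|| e_1 + nu alpha_k e_(k+1) and the top
   of O_k e_(k+1) is s_k e_k, so R_k z_k = g' + nu alpha_k s_k e_k: this is the
   correction term. *)

From HB Require Import structures.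
From mathcomp Require Import all_boot all_order all_algebra.
From mathcomp Require Import ring zify.
Set Implicit Arguments. Unset Strict Implicit. Unset Printing Implicit Defensive.
Import Order.TTheory GRing.Theory Num.Theory.
Local Open Scope ring_scope.

Lemma sum_delta (R : pzRingType) (M : lmodType R) k p (F : nat -> M) :
  \sum_(i < k) ((i : nat) == p)%:R *: F i = (p < k)%:R *: F p.
Proof.
have [lt_pk | le_kp] := ltnP p k; last first.
  by rewrite scale0r big1 // => i _; rewrite ltn_eqF ?scale0r // (leq_trans _ le_kp).
rewrite (bigD1 (Ordinal lt_pk)) //= eqxx scale1r big1 ?addr0 // => i ne_ip.
suff /negPf -> : (i : nat) != p by rewrite scale0r.
by apply: contra ne_ip => /eqP eq_ip; apply/eqP/val_inj.
Qed.

Lemma lift_ord_max m (i : 'I_m) : lift ord_max i = widen_ord (leqnSn m) i.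
Proof. exact/val_inj/lift_max. Qed.

Lemma cast_lift_max m (i : 'I_m) :
  cast_ord (esym (addn1 m)) (lift ord_max i) = lshift 1 i.
Proof. exact/val_inj/lift_max. Qed.

Lemma cast_ord_max m : cast_ord (esym (addn1 m)) ord_max = rshift m (ord0 : 'I_1).
Proof. by apply: val_inj; rewrite /= addn0. Qed.

Section InnerProduct.
Variables (C : numClosedFieldType) (m : nat).
Implicit Types (x y v : 'cV[C]_m).

Fact cdot_is_scalar x : scalar (cdot x).
Proof.
move=> a u v; rewrite /cdot mulr_sumr -big_split /=.
by apply: eq_bigr => i _; rewrite !mxE; ring.
Qed.
HB.instance Definition _ x :=
  GRing.isSemilinear.Build C 'cV[C]_m C _ (cdot x)
    (GRing.semilinear_linear (cdot_is_scalar x)).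

Lemma cdotC x y : cdot y x = (cdot x y)^*.
Proof.
by rewrite /cdot rmorph_sum; apply: eq_bigr => i _; rewrite rmorphM /= conjCK mulrC.
Qed.

Lemma cdotDl x y v : cdot (x + y) v = cdot x v + cdot y v.
Proof. by rewrite cdotC linearD rmorphD /= -!cdotC. Qed.

Lemma cdotZl a x v : cdot (a *: x) v = a^* * cdot x v.
Proof. by rewrite cdotC linearZ rmorphM /= -!cdotC. Qed.

Lemma cdot_suml I (r : seq I) (P : pred I) (F : I -> 'cV[C]_m) v :
  cdot (\sum_(i <- r | P i) F i) v = \sum_(i <- r | P i) cdot (F i) v.
Proof. by rewrite cdotC linear_sum rmorph_sum; apply: eq_bigr => i _; rewrite /= -cdotC. Qed.

Lemma cdot_ctrl p (A : 'M[C]_(p, m)) (u : 'cV[C]_p) v :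
  cdot (ctr A *m u) v = cdot u (A *m v).
Proof.
rewrite /cdot /ctr.
under eq_bigr => i _ do rewrite !mxE rmorph_sum mulr_suml.
rewrite exchange_big; apply: eq_bigr => r _ /=.
rewrite mxE mulr_sumr; apply: eq_bigr => i _; rewrite !mxE rmorphM /= conjCK; ring.
Qed.

Definition nsq v : C := \sum_i `|v i 0| ^+ 2.

Lemma cdotvv v : cdot v v = nsq v.
Proof. by apply: eq_bigr => i _; rewrite normCKC. Qed.

Lemma nsq_ge0 v : 0 <= nsq v.
Proof. by apply: sumr_ge0 => i _; rewrite exprn_ge0. Qed.

Lemma nsq_eq0 v : (nsq v == 0) = (v == 0).
Proof.
apply/idP/eqP => [|->]; last by rewrite /nsq big1 // => i _; rewrite mxE normr0 expr0n.
rewrite psumr_eq0 => [/allP v0|i _]; last by rewrite exprn_ge0.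
apply/matrixP => i j; rewrite ord1 mxE.
by have := v0 i (mem_index_enum _); rewrite /= sqrf_eq0 normr_eq0 => /eqP.
Qed.

Lemma nsq0 : nsq 0 = 0.
Proof. by apply/eqP; rewrite nsq_eq0. Qed.

Lemma norm2_eq0 v : (norm2 v == 0) = (v == 0).
Proof. by rewrite /norm2 sqrtC_eq0 nsq_eq0. Qed.

Lemma ler_norm2 x y : (norm2 x <= norm2 y) = (nsq x <= nsq y).
Proof. by rewrite ler_sqrtC // nnegrE nsq_ge0. Qed.

Lemma normalize_unit v : v != 0 -> cdot ((norm2 v)^-1 *: v) ((norm2 v)^-1 *: v) = 1.
Proof.
rewrite -norm2_eq0 => nz; rewrite cdotZl linearZ /= cdotvv.
have -> : nsq v = norm2 v ^+ 2 by rewrite sqrtCK.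
rewrite geC0_conj ?invr_ge0 ?sqrtC_ge0 ?nsq_ge0 //.
by rewrite mulrA -expr2 exprVn mulVf // expf_neq0.
Qed.
End InnerProduct.

Lemma lsq_unique_minimizer (C : numClosedFieldType) m p r
    (S : 'cV[C]_m -> Prop) (F : 'cV[C]_p -> 'cV[C]_m) (res : 'cV[C]_m -> 'cV[C]_r)
    (h : 'cV[C]_p) (R : 'M[C]_p) (e : C) :
  (forall y, S y -> exists a, y = F a) ->
  (forall a, nsq (res (F a)) = nsq (h - R *m a) + e) -> R \in unitmx ->
  let xt := F (invmx R *m h) in
  (forall y, S y -> norm2 (res xt) <= norm2 (res y)) /\
  (forall y, S y -> norm2 (res y) <= norm2 (res xt) -> y = xt).
Proof.
move=> S_F resF R_unit xt; have res_xt : nsq (res xt) = e.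
  by rewrite resF mulKVmx // subrr nsq0 add0r.
split=> y /S_F [a ->]; rewrite ler_norm2 res_xt resF ?lerDr ?nsq_ge0 // gerDr => le0.
have : nsq (h - R *m a) == 0 by rewrite eq_le le0 nsq_ge0.
by rewrite nsq_eq0 subr_eq0 /xt => /eqP ->; rewrite mulKmx.
Qed.

Section Spans.
Variables (C : numClosedFieldType) (m : nat).

Lemma span_tupleP k (F : 'I_k -> 'cV[C]_m) x :
  reflect (exists a : 'I_k -> C, x = \sum_i a i *: F i)
          (x \in <<[tuple F i | i < k]>>%VS).
Proof.
apply: (iffP idP) => [/coord_span -> | [a ->]].
  exists (fun i => coord [tuple F i | i < k] i x).
  by apply: eq_bigr => i _; rewrite -tnth_nth tnth_mktuple.
apply: memv_suml => i _; apply/memvZ/memv_span.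
by rewrite -(tnth_mktuple F i) mem_tnth.
Qed.

Lemma mulmx_span (A : 'M[C]_m) (X : seq 'cV[C]_m) (U : {vspace 'cV[C]_m}) x :
  {in X, forall v, A *m v \in U} -> x \in <<X>>%VS -> A *m x \in U.
Proof.
move=> AX /(@coord_span _ _ _ (in_tuple X)) ->; rewrite mulmx_sumr; apply: memv_suml => i _.
by rewrite -scalemxAr memvZ // AX // mem_nth.
Qed.

Lemma cdot_span_eq0 y (X : seq 'cV[C]_m) x :
  {in X, forall v, cdot y v = 0} -> x \in <<X>>%VS -> cdot y x = 0.
Proof.
move=> yX /(@coord_span _ _ _ (in_tuple X)) ->; rewrite linear_sum big1 // => i _.
by rewrite linearZ /= yX ?mulr0 // mem_nth.
Qed.
End Spans.

Section Krylov.
Variables (C : numClosedFieldType) (n : nat) (D : 'M[C]_n) (b : 'cV[C]_n).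

Definition kspace k := <<[tuple iter i (mulmx D) b | i < k]>>%VS.

Lemma krylovP k x : reflect (krylov D b k x) (x \in kspace k).
Proof. exact: span_tupleP. Qed.

Lemma mem_kspace i k : (i < k)%N -> iter i (mulmx D) b \in kspace k.
Proof.
move=> lt_ik; apply: memv_span.
by rewrite -(tnth_mktuple (fun i : 'I_k => iter i (mulmx D) b) (Ordinal lt_ik)) mem_tnth.
Qed.

Lemma kspaceS i k : (i <= k)%N -> (kspace i <= kspace k)%VS.
Proof.
move=> le_ik; apply/span_subvP => _ /mapP [a _ ->].
by apply: mem_kspace; apply: leq_trans le_ik.
Qed.

Lemma mulmx_kspace k x : x \in kspace k -> D *m x \in kspace k.+1.
Proof.
move=> x_in; apply: mulmx_span x_in => _ /mapP [a _ ->].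
change (iter a.+1 (mulmx D) b \in kspace k.+1).
by apply: mem_kspace; rewrite ltnS.
Qed.
End Krylov.

Section Arnoldi.
Variables (C : numClosedFieldType) (n : nat) (V : 'M[C]_n) (b : 'cV[C]_n).

Local Notation q := (uq V b).
Local Notation u := (uu V b).
Local Notation l := (ul V b).
Local Notation ls := (ulsub V b).

Lemma uq1 : q 1 = (norm2 b)^-1 *: b. Proof. by []. Qed.

Lemma b_uq1 : b != 0 -> b = norm2 b *: q 1.
Proof. by move=> b_nz; rewrite uq1 scalerA mulfV ?scale1r ?norm2_eq0. Qed.

Lemma uqS j : (0 < j)%N -> q j.+1 = (ls j)^-1 *: ua_qtilde V j (q j.-1) (q j).
Proof.
have pairE i : ua_pair V b i = (q i, q i.+1) by elim: i => //= i IH; rewrite /uq /= IH.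
by case: j => // j _; rewrite /uq /= pairE.
Qed.

(* The j-th column of Q_k U_k. *)
Definition uw j := q j + u j *: q j.-1.

Lemma Vuw j : (0 < j)%N -> ls j != 0 -> V *m uw j = ls j *: q j.+1 + l j *: q j.
Proof.
move=> j_gt0 ls_nz; rewrite uqS // scalerA mulfV // scale1r /ua_qtilde.
by rewrite /uw mulmxDr -scalemxAr addrAC subrK.
Qed.

Lemma uq_next j : (0 < j)%N -> ls j != 0 ->
  q j.+1 = (ls j)^-1 *: (V *m uw j - l j *: q j).
Proof. by move=> *; rewrite Vuw // addrK scalerA mulVf // scale1r. Qed.

Definition qspace j := <<[tuple q i.+1 | i < j]>>%VS.

Lemma mem_qspace i j : (i <= j)%N -> q i \in qspace j.
Proof.
case: i => [_ | i lt_ij]; first exact: mem0v.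
by apply: memv_span; rewrite -(tnth_mktuple (fun i : 'I_j => q i.+1) (Ordinal lt_ij)) mem_tnth.
Qed.

Lemma qspaceS i j : (i <= j)%N -> (qspace i <= qspace j)%VS.
Proof.
move=> le_ij; apply/span_subvP => _ /mapP [a _ ->].
by apply: mem_qspace; apply: leq_trans le_ij.
Qed.

Lemma uw_qspace j : uw j \in qspace j.
Proof. by rewrite memvD ?memvZ ?mem_qspace ?leq_pred. Qed.

Definition q_orthonormal N := forall i j, (0 < i <= N)%N -> (0 < j <= N)%N ->
  cdot (q i) (q j) = (i == j)%:R.

Lemma cdot_q_qspace N i j x : q_orthonormal N -> (j < i <= N)%N ->
  x \in qspace j -> cdot (q i) x = 0.
Proof.
move=> qON /andP [lt_ji le_iN]; apply: cdot_span_eq0 => _ /mapP [a _ ->].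
have lt_ai : (a.+1 < i)%N := leq_ltn_trans (ltn_ord a) lt_ji.
by rewrite qON ?gtn_eqF //; lia.
Qed.

Lemma cdot_qspace_q N i j x : q_orthonormal N -> (j < i <= N)%N ->
  x \in qspace j -> cdot x (q i) = 0.
Proof. by move=> *; rewrite cdotC (cdot_q_qspace (N := N) (j := j)) ?rmorph0. Qed.

Lemma cdot_qspace_uw N j s : q_orthonormal N -> (1 < j <= N)%N ->
  s \in qspace j.-2 -> cdot s (uw j) = 0.
Proof.
move=> qON /andP [lt1j leN] s_in; rewrite linearD linearZ /=.
by rewrite !(cdot_qspace_q (N := N) (j := j.-2)) ?mulr0 ?addr0 //; lia.
Qed.

Hypothesis V_unitary : unitary V.

Variable K : nat.
Hypothesis ls_neq0 : forall j, (1 <= j <= K)%N -> ls j != 0.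
Hypothesis dotV_neq0 : forall j, (2 <= j <= K)%N -> cdot (q j.-1) (V *m q j.-1) != 0.

Lemma ctrV_uq j : (0 < j <= K.+1)%N ->
  ctr V *m q j \in (<[ctr V *m q 1]> + qspace j.-1)%VS.
Proof.
elim: j => // j IH /andP [_ le_jK].
case: j IH le_jK => [_ _ | j IH le_jK]; first exact/(subvP (addvSl _ _))/memv_line.
have VV : ctr V *m V = 1%:M := mulmx1C V_unitary.
have ls_nz : ls j.+1 != 0 by apply: ls_neq0; lia.
rewrite uq_next //.
rewrite -scalemxAr mulmxBr mulmxA VV mul1mx -scalemxAr memvZ // memvB //.
  exact/(subvP (addvSr _ _))/uw_qspace.
rewrite memvZ // (subvP (addvS (subvv _) (qspaceS (leqnSn j)))) // IH //; lia.
Qed.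

Lemma ctrV_uq_split j : (0 < j <= K.+1)%N -> exists c, exists2 s,
  s \in qspace j.-1 & ctr V *m q j = c *: (ctr V *m q 1) + s.
Proof.
move=> /ctrV_uq /memv_addP [_ /vlineP [c ->] [s s_in ->]].
by exists c, s.
Qed.

Lemma cdot_prev_Vuw j : (1 < j <= K)%N -> cdot (q j.-1) (V *m uw j) = 0.
Proof.
move=> j_range; rewrite /uw mulmxDr -scalemxAr linearD linearZ /= /uu /ua_u.
by rewrite ifN ?mulNr ?divfK ?subrr ?dotV_neq0 //; lia.
Qed.

(* The coefficient of V^* q_1 in V^* q_(j-1) is nonzero, since otherwise
   <q_(j-1), V q_(j-1)> would vanish; so the relation <q_(j-1), V w_j> = 0
   enforced by u_(j-1,j) transfers to q_1. *)
Lemma cdot_q1_Vuw j : (1 < j <= K)%N -> q_orthonormal j -> cdot (q 1) (V *m uw j) = 0.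
Proof.
move=> j_range qON.
have [c [s s_in Eprev]] := ctrV_uq_split (j := j.-1) (ltac:(lia)).
have c_nz : c != 0.
  apply: contraNneq (dotV_neq0 j_range) => c0.
  rewrite -cdot_ctrl Eprev c0 scale0r add0r cdotC.
  by rewrite (cdot_q_qspace (N := j) (j := j.-2)) ?rmorph0 //; lia.
have := cdot_prev_Vuw j_range; rewrite -cdot_ctrl Eprev cdotDl cdotZl cdot_ctrl.
rewrite (cdot_qspace_uw (N := j)) ?addr0 //; last lia.
by move/eqP; rewrite mulf_eq0 conjC_eq0 (negPf c_nz) => /eqP.
Qed.

Lemma cdot_q_Vuw i j : (0 < j <= K)%N -> q_orthonormal j -> (0 < i <= j)%N ->
  cdot (q i) (V *m uw j) = (i == j)%:R * l j.
Proof.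
move=> j_range qON i_range.
have [->|ne_ij] := eqVneq i j.
  by rewrite mul1r /uw mulmxDr -scalemxAr linearD linearZ.
rewrite mul0r; have [->|ne_ij1] := eqVneq i j.-1; first by apply: cdot_prev_Vuw; lia.
have [c [s s_in Ei]] := ctrV_uq_split (j := i) (ltac:(lia)).
rewrite -cdot_ctrl Ei cdotDl cdotZl cdot_ctrl cdot_q1_Vuw ?mulr0 ?add0r //; try lia.
apply: (cdot_qspace_uw (N := j)) => //; first lia.
by apply: subvP s_in; apply: qspaceS; lia.
Qed.

Lemma q_orthonormalS j : (0 < j <= K)%N -> q_orthonormal j -> q_orthonormal j.+1.
Proof.
move=> j_range qON; have ls_nz := ls_neq0 j_range.
have q_perp i : (0 < i <= j)%N -> cdot (q i) (q j.+1) = 0.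
  move=> i_range; rewrite uq_next; try lia => //.
  rewrite linearZ linearB linearZ /= cdot_q_Vuw // qON //; last lia.
  by rewrite [_ * l j]mulrC subrr mulr0.
have q_unit : cdot (q j.+1) (q j.+1) = 1.
  by rewrite uqS; [apply: normalize_unit; rewrite -norm2_eq0 | lia].
move=> i i' i_range i'_range.
have [->|ne_i] := eqVneq i j.+1; have [->|ne_i'] := eqVneq i' j.+1.
- exact: q_unit.
- by rewrite cdotC q_perp ?rmorph0 //; lia.
- by rewrite (negPf ne_i) q_perp //; lia.
- by apply: qON; lia.
Qed.

Lemma uq_orthonormal : b != 0 -> q_orthonormal K.+1.
Proof.
move=> b_nz; suff qON j : (0 < j <= K.+1)%N -> q_orthonormal j by apply: qON; lia.
elim: j => // -[_ _ | j IH j_range].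
  move=> i i' ? ?; have -> : i = 1%N by lia.
  have -> : i' = 1%N by lia.
  exact: normalize_unit.
by apply: q_orthonormalS; [lia | apply: IH; lia].
Qed.

Lemma V_uq_qspace j : (j <= K)%N -> V *m q j \in qspace j.+1.
Proof.
elim: j => [_ | j IH le_jK]; first by rewrite mulmx0 mem0v.
have -> : V *m q j.+1 = V *m uw j.+1 - u j.+1 *: (V *m q j).
  by rewrite /uw mulmxDr -scalemxAr addrK.
rewrite Vuw //; last by apply: ls_neq0; lia.
rewrite memvB ?memvD ?memvZ ?mem_qspace //.
by apply: (subvP (qspaceS (leqnSn j.+1))); apply: IH; lia.
Qed.

Variables c1 c2 : C.
Local Notation D := (c1%:M + c2 *: V).

Lemma D_qspace j x : (j <= K)%N -> x \in qspace j -> D *m x \in qspace j.+1.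
Proof.
move=> le_jK x_in; apply: mulmx_span x_in => _ /mapP [c _ ->]; have lt_cj := ltn_ord c.
rewrite mulmxDl mul_scalar_mx -scalemxAl memvD ?memvZ ?mem_qspace //; first lia.
by apply: (subvP (qspaceS (_ : c.+2 <= j.+1)%N)); [lia | apply: V_uq_qspace; lia].
Qed.

Lemma kspace_sub_qspace j : b != 0 -> (j <= K.+1)%N -> (kspace D b j <= qspace j)%VS.
Proof.
move=> b_nz le_jK; apply/span_subvP => _ /mapP [a _ ->].
apply: (subvP (qspaceS (ltn_ord a))).
elim: (nat_of_ord a) (leq_trans (ltn_ord a) le_jK) => [_ | i IH lt_iK] /=.
  by rewrite {1}b_uq1 // memvZ ?mem_qspace.
by apply: D_qspace (IH (ltnW lt_iK)); lia.
Qed.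

Lemma V_kspace j x : c2 != 0 -> x \in kspace D b j -> V *m x \in kspace D b j.+1.
Proof.
move=> c2_nz x_in; have -> : V *m x = c2^-1 *: (D *m x - c1 *: x).
  by rewrite mulmxDl mul_scalar_mx -scalemxAl addrC addKr scalerA mulVf ?scale1r.
by rewrite memvZ // memvB ?mulmx_kspace // memvZ // (subvP (kspaceS _ _ (leqnSn _))).
Qed.

Lemma qspace_sub_kspace j : b != 0 -> c2 != 0 -> (j <= K.+1)%N ->
  (qspace j <= kspace D b j)%VS.
Proof.
move=> b_nz c2_nz; elim: j => [_ | j IH le_jK].
  by apply/span_subvP => v /mapP [[]].
have qk := IH (ltnW le_jK); have kS := kspaceS D b (leqnSn j).
have q_next : q j.+1 \in kspace D b j.+1.
  case: j IH qk kS le_jK => [_ _ _ _ | j _ qk kS le_jK].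
    by rewrite uq1 memvZ // (@mem_kspace _ _ _ _ 0).
  rewrite uq_next //; last by apply: ls_neq0; lia.
  rewrite memvZ // memvB ?V_kspace ?memvZ ?(subvP kS) ?(subvP qk) ?uw_qspace ?mem_qspace //.
apply/span_subvP => _ /mapP [a _ ->].
have [lt_aj | le_ja] := ltnP a j; first by apply/(subvP kS)/(subvP qk)/mem_qspace.
by have -> : nat_of_ord a = j by have := ltn_ord a; lia.
Qed.
End Arnoldi.

Section ArnoldiMatrices.
Variables (C : numClosedFieldType) (n : nat) (V : 'M[C]_n) (b : 'cV[C]_n).

Local Notation q := (uq V b).
Local Notation u := (uu V b).
Local Notation l := (ul V b).
Local Notation ls := (ulsub V b).
Local Notation Q := (Qk V b).

Lemma Qk_mulmx k (a : 'cV[C]_k) : Q k *m a = \sum_(i < k) a i 0 *: q i.+1.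
Proof.
apply/matrixP => r c; rewrite ord1 !mxE summxE.
by apply: eq_bigr => i _; rewrite !mxE mulrC.
Qed.

Lemma qspaceP k x : reflect (exists a, x = Q k *m a) (x \in qspace V b k).
Proof.
apply: (iffP (span_tupleP _ _)) => [[a ->] | [a ->]].
  by exists (\col_i a i); rewrite Qk_mulmx; apply: eq_bigr => i _; rewrite mxE.
by exists (fun i => a i 0); rewrite Qk_mulmx.
Qed.

Lemma Qk_e1 k : Q k.+1 *m e1 C k.+1 = q 1.
Proof.
rewrite Qk_mulmx (eq_bigr (fun i : 'I_k.+1 => ((i : nat) == 0%N)%:R *: q i.+1)).
  by rewrite (sum_delta _ _ (fun i => q i.+1)) scale1r.
by move=> i _; rewrite mxE.
Qed.

Lemma Qk_mulmx_mul k (M : 'M[C]_k) (a : 'cV[C]_k) :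
  Q k *m (M *m a) = \sum_(j < k) a j 0 *: (Q k *m col j M).
Proof.
rewrite Qk_mulmx; under eq_bigr => i _ do rewrite mxE scaler_suml.
rewrite exchange_big; apply: eq_bigr => j _ /=.
rewrite Qk_mulmx scaler_sumr; apply: eq_bigr => i _.
by rewrite !mxE scalerA mulrC.
Qed.

Lemma Qk_Uk_col k (j : 'I_k) : Q k *m col j (Uk V b k) = uw V b j.+1.
Proof.
rewrite Qk_mulmx /uw; case: j => -[|j] lt_jk /=.
  rewrite scaler0 addr0 (eq_bigr (fun i : 'I_k => ((i : nat) == 0%N)%:R *: q i.+1)).
    by rewrite (sum_delta _ _ (fun i => q i.+1)) lt_jk scale1r.
  by move=> i _; rewrite !mxE; case: eqP.
rewrite (eq_bigr (fun i : 'I_k => ((i : nat) == j.+1)%:R *: q i.+1 +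
    ((i : nat) == j)%:R *: (u j.+2 *: q i.+1))).
  rewrite big_split /= (sum_delta _ _ (fun i => q i.+1)).
  by rewrite (sum_delta _ _ (fun i => _ *: q i.+1)) lt_jk ltnW // !scale1r.
move=> i _; rewrite !mxE scalerA -scalerDl; congr (_ *: _).
rewrite eqSS [(j == _)]eq_sym.
by case: eqP => /= E; case: eqP => E'; try lia; rewrite ?mul0r ?mul1r ?addr0 ?add0r.
Qed.

Lemma Qk_Lk_col k (j : 'I_k) :
  Q k *m col j (Lk V b k) = l j.+1 *: q j.+1 + (j.+1 < k)%:R *: (ls j.+1 *: q j.+2).
Proof.
rewrite Qk_mulmx (eq_bigr (fun i : 'I_k => ((i : nat) == j)%:R *: (l j.+1 *: q i.+1) +
    ((i : nat) == j.+1)%:R *: (ls j.+1 *: q i.+1))).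
  rewrite big_split /= (sum_delta _ _ (fun i => l j.+1 *: q i.+1)).
  by rewrite (sum_delta _ _ (fun i => ls j.+1 *: q i.+1)) ltn_ord scale1r.
move=> i _; rewrite !mxE !scalerA -scalerDl; congr (_ *: _).
by case: eqP => [-> | ne_ij]; case: eqP => /=; try lia; rewrite ?mul0r ?mul1r ?addr0 ?add0r.
Qed.

Lemma Uk_unitmx k : Uk V b k \in unitmx.
Proof.
rewrite unitmxE -det_tr det_trig.
  by rewrite big1 ?unitr1 // => i _; rewrite !mxE eqxx.
apply/is_trig_mxP => i j lt_ij; rewrite !mxE.
by case: eqP => [/= E | _]; [lia | case: eqP => //= E; lia].
Qed.

Lemma nsq_Qk N k v : q_orthonormal V b N -> (k <= N)%N -> nsq (Q k *m v) = nsq v.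
Proof.
move=> qON le_kN; rewrite -!cdotvv Qk_mulmx cdot_suml; apply: eq_bigr => i _.
rewrite cdotZl linear_sum (bigD1 i) //= big1 ?addr0 => [|j ne_ji].
  by rewrite linearZ /= qON ?eqxx ?mulr1 //; have := ltn_ord i; lia.
rewrite linearZ /= qON; first by rewrite eqSS (negPf (_ : (i : nat) != j)) ?mulr0 // eq_sym.
all: have := ltn_ord i; have := ltn_ord j; lia.
Qed.

Lemma V_QkUk k (a : 'cV[C]_k.+1) : (forall j, (1 <= j <= k.+1)%N -> ls j != 0) ->
  V *m (Q k.+1 *m (Uk V b k.+1 *m a)) =
  Q k.+1 *m (Lk V b k.+1 *m a) + (ls k.+1 * a ord_max 0) *: q k.+2.
Proof.
move=> ls_nz; rewrite !Qk_mulmx_mul mulmx_sumr.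
under eq_bigr => j _ do rewrite -scalemxAr Qk_Uk_col (Vuw (ltn0Sn _) (ls_nz j.+1 (ltn_ord j))).
under [X in _ = X + _]eq_bigr => j _ do rewrite Qk_Lk_col.
rewrite !big_ord_recr /= ltnn scale0r addr0 -addrA; congr (_ + _).
  by apply: eq_bigr => j _; rewrite ltnS ltn_ord scale1r addrC.
by rewrite scalerDr addrC scalerA mulrC scalerA [a _ _ * _]mulrC.
Qed.
Lemma Qk_row'_max k (v : 'cV[C]_k.+1) :
  Q k.+1 *m v = Q k *m row' ord_max v + v ord_max 0 *: q k.+1.
Proof.
rewrite !Qk_mulmx big_ord_recr /=; congr (_ + _).
by apply: eq_bigr => i _; rewrite mxE lift_ord_max.
Qed.
End ArnoldiMatrices.

Section LastCoordinate.
Variable C : numClosedFieldType.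

Lemma nsq_row'_max m (v : 'cV[C]_m.+1) :
  nsq v = nsq (row' ord_max v) + `|v ord_max 0| ^+ 2.
Proof.
by rewrite /nsq big_ord_recr; congr (_ + _); apply: eq_bigr => i _; rewrite mxE lift_ord_max.
Qed.

Lemma row'_max_ext m (x y : 'cV[C]_m.+1) :
  row' ord_max x = row' ord_max y -> x ord_max 0 = y ord_max 0 -> x = y.
Proof.
move=> /row'_eq eq_xy eq_max; apply/matrixP => i j; rewrite ord1.
by have [-> // | ne_i] := eqVneq i ord_max; apply: eq_xy; rewrite inE.
Qed.

Lemma castmx_col_mx_mul k p (A : 'M[C]_(k, p)) (B : 'M[C]_(1, p)) (a : 'cV[C]_p) :
  let M := castmx (addn1 k, erefl p) (col_mx A B) in
  row' ord_max (M *m a) = A *m a /\ (M *m a) ord_max 0 = (B *m a) 0 0.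
Proof.
split.
  apply/matrixP => i j; rewrite !mxE; apply: eq_bigr => r _.
  by rewrite castmxE /= cast_lift_max cast_ord_id col_mxEu.
rewrite !mxE; apply: eq_bigr => r _.
by rewrite castmxE /= cast_ord_max cast_ord_id col_mxEd.
Qed.

Lemma row'_max_elast k : row' ord_max (elast C k.+1) = 0.
Proof. by apply/matrixP => i j; rewrite !mxE lift_max ltn_eqF. Qed.

Lemma elastT_mul p (a : 'cV[C]_p.+1) : ((elast C p.+1)^T *m a) 0 0 = a ord_max 0.
Proof.
rewrite mxE (bigD1 ord_max) //= !mxE eqxx mul1r big1 ?addr0 // => i ne_i.
by rewrite !mxE (negPf (_ : (i : nat) != p)) ?mul0r //; apply: contra ne_i => /eqP/val_inj ->.
Qed.

End LastCoordinate.

Section Rotations.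
Variable C : numClosedFieldType.

Lemma diag_extE m (M : 'M[C]_m) (i j : 'I_m) :
  [/\ diag_ext M (lift ord_max i) (lift ord_max j) = M i j,
       diag_ext M (lift ord_max i) ord_max = 0 &
       diag_ext M ord_max (lift ord_max j) = 0].
Proof.
rewrite /diag_ext !castmxE /= !cast_lift_max cast_ord_max.
by rewrite block_mxEul block_mxEur block_mxEdl !mxE.
Qed.

Lemma diag_ext_max m (M : 'M[C]_m) : diag_ext M ord_max ord_max = 1.
Proof.
by rewrite /diag_ext castmxE /= cast_ord_max block_mxEdr mxE.
Qed.

Lemma diag_ext_mul m (M : 'M[C]_m) (v : 'cV[C]_m.+1) :
  row' ord_max (diag_ext M *m v) = M *m row' ord_max v /\
  (diag_ext M *m v) ord_max 0 = v ord_max 0.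
Proof.
split.
  apply/matrixP => i j; rewrite !mxE big_ord_recr /=.
  have [_ -> _] := diag_extE M i i; rewrite mul0r addr0.
  apply: eq_bigr => a _; rewrite -lift_ord_max mxE.
  by have [-> _ _] := diag_extE M i a.
rewrite mxE big_ord_recr /= diag_ext_max.
rewrite mul1r big1 ?add0r // => a _; rewrite -lift_ord_max.
by have [_ _ ->] := diag_extE M a a; rewrite mul0r.
Qed.

Lemma sum_delta_ord k (i : 'I_k) (F : 'I_k -> C) :
  \sum_(a < k) ((a : nat) == i)%:R * F a = F i.
Proof.
rewrite (bigD1 i) //= eqxx mul1r big1 ?addr0 // => a ne_ai.
by rewrite (negPf (_ : (a : nat) != i)) ?mul0r.
Qed.

Lemma givensE j (c s : C) (r a : 'I_j.+2) : givens j.+1 c s r a =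
  if (r : nat) == j then ((a : nat) == j)%:R * c + ((a : nat) == j.+1)%:R * s
  else if (r : nat) == j.+1 then ((a : nat) == j)%:R * - s^* + ((a : nat) == j.+1)%:R * c
  else ((r : nat) == a)%:R.
Proof.
have := ltn_ord r; have := ltn_ord a; rewrite mxE /= => lt_a lt_r.
case: ((r : nat) =P j) => Er; case: ((a : nat) =P j) => Ea;
  case: ((a : nat) =P j.+1) => Ea1; case: ((r : nat) =P j.+1) => Er1 /=;
  rewrite ?mul1r ?mul0r ?addr0 ?add0r //; try lia.
all: case: eqP => // *; lia.
Qed.

Lemma givens_mulE j (c s : C) (v : 'cV[C]_j.+2) (r : 'I_j.+2) :
  let P := widen_ord (leqnSn j.+1) ord_max in
  (givens j.+1 c s *m v) r 0 =
    if (r : nat) == j then c * v P 0 + s * v ord_max 0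
    else if (r : nat) == j.+1 then - s^* * v P 0 + c * v ord_max 0
    else v r 0.
Proof.
move=> P; rewrite mxE; under eq_bigr => a _ do rewrite givensE.
case: ifP => _; [|case: ifP => _].
- under eq_bigr => a _ do rewrite mulrDl -!mulrA.
  rewrite big_split /= (sum_delta_ord P (fun a => c * v a 0)).
  by rewrite (sum_delta_ord ord_max (fun a => s * v a 0)).
- under eq_bigr => a _ do rewrite mulrDl -!mulrA.
  rewrite big_split /= (sum_delta_ord P (fun a => - s^* * v a 0)).
  by rewrite (sum_delta_ord ord_max (fun a => c * v a 0)).
- under eq_bigr => a _ do rewrite eq_sym.
  exact: (sum_delta_ord r (fun a => v a 0)).
Qed.

Lemma rotation_norm (c s x y : C) : 0 <= c -> c ^+ 2 + `|s| ^+ 2 = 1 ->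
  `|c * x + s * y| ^+ 2 + `|- s^* * x + c * y| ^+ 2 = `|x| ^+ 2 + `|y| ^+ 2.
Proof.
move=> c_ge0; rewrite !normCK !rmorphD !rmorphM /= !rmorphN /= conjCK (geC0_conj c_ge0) => cs1.
by rewrite -[RHS]mul1r -cs1; ring.
Qed.

Lemma nsq_givens j (c s : C) (v : 'cV[C]_j.+2) : 0 <= c -> c ^+ 2 + `|s| ^+ 2 = 1 ->
  nsq (givens j.+1 c s *m v) = nsq v.
Proof.
move=> c_ge0 cs1; rewrite /nsq !big_ord_recr /= !givens_mulE /= eqxx.
rewrite (gtn_eqF (ltnSn j)) eqxx -!addrA rotation_norm //; congr (_ + _).
apply: eq_bigr => i _; rewrite givens_mulE /=.
by rewrite (ltn_eqF (ltn_ord i)) (ltn_eqF (leqW (ltn_ord i))).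
Qed.

Lemma nsq_Omat (cg sg : nat -> C) k (v : 'cV[C]_k.+1) :
  (forall j, (1 <= j <= k)%N -> 0 <= cg j /\ cg j ^+ 2 + `|sg j| ^+ 2 = 1) ->
  nsq (Omat cg sg k *m v) = nsq v.
Proof.
elim: k v => [|k IH] v cs_ok; first by rewrite /= mul1mx.
have [c_ge0 cs1] := cs_ok k.+1 (ltac:(lia)).
rewrite /= -mulmxA nsq_givens // nsq_row'_max; have [-> ->] := diag_ext_mul (Omat cg sg k) v.
by rewrite IH -?nsq_row'_max // => j j_range; apply: cs_ok; lia.
Qed.

Lemma Omat_elast (cg sg : nat -> C) k :
  row' ord_max (Omat cg sg k.+1 *m elast C k.+2) = sg k.+1 *: elast C k.+1.
Proof.
have diag_elast : diag_ext (Omat cg sg k) *m elast C k.+2 = elast C k.+2.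
  have [top_eq last_eq] := diag_ext_mul (Omat cg sg k) (elast C k.+2).
  by apply: row'_max_ext; rewrite ?top_eq ?row'_max_elast ?mulmx0.
apply/matrixP => i j; rewrite ord1 /= -mulmxA diag_elast [LHS]mxE givens_mulE lift_max !mxE /=.
rewrite eqxx (ltn_eqF (ltnSn k)) (ltn_eqF (ltn_ord i)) mulr0 add0r mulr1.
by case: eqP; rewrite ?mulr1 ?mulr0 // /bump leqNgt ltn_ord add0n ltn_eqF.
Qed.
End Rotations.

Section MinimalResidual.
Variables (C : numClosedFieldType) (n k : nat) (V : 'M[C]_n) (b : 'cV[C]_n).
Variables (c1 c2 : C) (cg sg : nat -> C) (z : 'cV[C]_k.+1) (R : 'M[C]_k.+1).

Local Notation D := (c1%:M + c2 *: V).
Local Notation Q := (Qk V b k.+1).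
Local Notation U := (Uk V b k.+1).
Local Notation T := (c1 *: U + c2 *: Lk V b k.+1).
Local Notation nu := (c2 * ulsub V b k.+1).
Local Notation Tt := (castmx (addn1 k.+1, erefl k.+1)
  (col_mx T (nu *: (elast C k.+1)^T))).
Local Notation beta := (norm2 b).
Local Notation g := (Omat cg sg k.+1 *m (beta *: e1 C k.+2)).

Hypothesis V_unitary : unitary V.
Hypothesis b_neq0 : b != 0.
Hypothesis ls_neq0 : forall j, (1 <= j <= k.+1)%N -> ulsub V b j != 0.
Hypothesis dotV_neq0 :
  forall j, (2 <= j <= k.+1)%N -> cdot (uq V b j.-1) (V *m uq V b j.-1) != 0.
Hypothesis rotations : forall j, (1 <= j <= k.+1)%N ->
  0 <= cg j /\ cg j ^+ 2 + `|sg j| ^+ 2 = 1.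
Hypothesis O_Tt : Omat cg sg k.+1 *m Tt =
  castmx (addn1 k.+1, erefl k.+1) (col_mx R (0 : 'M[C]_(1, k.+1))).
Hypothesis R_unit : R \in unitmx.
Hypothesis Tz : T *m z = beta *: e1 C k.+1.

Lemma D_QkUk (a : 'cV[C]_k.+1) : D *m (Q *m (U *m a)) = Qk V b k.+2 *m (Tt *m a).
Proof.
have [Tt_top Tt_last] := castmx_col_mx_mul T (nu *: (elast C k.+1)^T) a.
rewrite [RHS]Qk_row'_max Tt_top Tt_last -scalemxAl mxE elastT_mul.
rewrite mulmxDl mul_scalar_mx -scalemxAl V_QkUk // mulmxDl -!scalemxAl.
rewrite mulmxDr -!scalemxAr scalerDr addrA scalerA; congr (_ + _ + _).
by rewrite mulrA.
Qed.

Lemma residual_QkUk (a : 'cV[C]_k.+1) :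
  nsq (b - D *m (Q *m (U *m a))) = nsq (row' ord_max g - R *m a) + `|g ord_max 0| ^+ 2.
Proof.
have qON := uq_orthonormal V_unitary ls_neq0 dotV_neq0 b_neq0.
rewrite D_QkUk {1}(b_uq1 V b_neq0) -(Qk_e1 V b k.+1) scalemxAr -mulmxBr (nsq_Qk _ qON) //.
rewrite -(nsq_Omat _ rotations) mulmxBr mulmxA O_Tt nsq_row'_max.
have [R_top R_last] := castmx_col_mx_mul R 0 a.
set M := castmx _ _ *m a in R_top R_last *.
have -> : (g - M) ord_max 0 = g ord_max 0 - M ord_max 0 by rewrite !mxE.
by rewrite linearB /= R_top R_last mul0mx [(0 : 'M_1) _ _]mxE subr0.
Qed.
Lemma krylov_QkUk y : krylov D b k.+1 y -> exists a, y = Q *m (U *m a).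
Proof.
move/krylovP/(subvP (kspace_sub_qspace ls_neq0 c1 c2 b_neq0 (leqnSn _)))/qspaceP => [a ->].
by exists (invmx U *m a); rewrite mulKVmx ?Uk_unitmx.
Qed.

Lemma QkUk_krylov a : c2 != 0 -> krylov D b k.+1 (Q *m (U *m a)).
Proof.
move=> c2_nz; apply/krylovP/(subvP (qspace_sub_kspace ls_neq0 c1 b_neq0 c2_nz (leqnSn _))).
by apply/qspaceP; exists (U *m a).
Qed.

Local Notation alpha := (((elast C k.+1)^T *m z) 0 0).
Local Notation xcoef := (nu * alpha * sg k.+1).

Lemma Tt_z : Tt *m z = beta *: e1 C k.+2 + (nu * alpha) *: elast C k.+2.
Proof.
have [Tt_top Tt_last] := castmx_col_mx_mul T (nu *: (elast C k.+1)^T) z.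
apply: row'_max_ext.
  rewrite Tt_top Tz linearD !linearZ /= row'_max_elast scaler0 addr0; congr (_ *: _).
  by apply/matrixP => i j; rewrite !mxE lift_max.
by rewrite Tt_last -scalemxAl !mxE eqxx /= mulr0 add0r mulr1.
Qed.

Lemma R_mul_corrected : R *m (z - xcoef *: (invmx R *m elast C k.+1)) = row' ord_max g.
Proof.
have [R_top _] := castmx_col_mx_mul R 0 z.
have Rz : R *m z = row' ord_max g + xcoef *: elast C k.+1.
  rewrite -R_top -O_Tt -mulmxA Tt_z mulmxDr linearD; congr (_ + _).
  by rewrite -scalemxAr linearZ /= -/(Omat cg sg k.+1) Omat_elast scalerA.
by rewrite mulmxBr Rz scalemxAr mulKVmx // addrK.
Qed.

(* For c2 = 0 the Krylov space is just the line through b, smaller than the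
   range of Q_k U_k; but then nu = 0 and x_k = b / c1. *)
Lemma xt_krylov : krylov D b k.+1 (Q *m (U *m (z - xcoef *: (invmx R *m elast C k.+1)))).
Proof.
have [c2_0 | c2_nz] := eqVneq c2 0; last exact: QkUk_krylov.
have Uz : U *m z = (c1^-1 * beta) *: e1 C k.+1.
  have c1Uz : c1 *: (U *m z) = beta *: e1 C k.+1.
    by rewrite scalemxAl -Tz c2_0 scale0r addr0.
  have c1_nz : c1 != 0.
    apply/eqP => c1_0; move/matrixP/(_ ord0 ord0): c1Uz.
    by rewrite c1_0 !mxE eqxx mul0r mulr1 => /esym/eqP; rewrite norm2_eq0 (negPf b_neq0).
  by rewrite -scalerA -c1Uz scalerA mulVf ?scale1r.
rewrite c2_0 !mul0r !scale0r subr0 Uz -scalemxAr Qk_e1 -scalerA -(b_uq1 V b_neq0).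
by apply/krylovP; rewrite memvZ // (@mem_kspace _ _ _ _ 0).
Qed.
End MinimalResidual.

Theorem mainTheorem6 (C : numClosedFieldType) (n k : nat)
  (V : 'M[C]_n) (b : 'cV[C]_n) (c1 c2 : C)
  (cg sg : nat -> C) (z : 'cV[C]_k) (R : 'M[C]_k) :
  unitary V ->
  c1 \is Num.real -> c2 \is Num.real ->
  b != 0 ->
  (0 < k)%N ->
  no_breakdown V b k ->
  let D := c1%:M + c2 *: V in
  let Q := Qk V b k in
  let L := Lk V b k in
  let U := Uk V b k in
  let T := c1 *: U + c2 *: L in
  nonsingular_LU T ->
  T *m z = norm2 b *: e1 C k ->
  let alpha := ((elast C k)^T *m z) 0 0 in
  let x := Q *m U *m z in
  let nu := c2 * ulsub V b k in
  let Tt : 'M[C]_(k + 1, k) := col_mx T (nu *: (elast C k)^T) in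
  (forall j, (1 <= j <= k)%N -> 0 <= cg j /\ cg j ^+ 2 + `|sg j| ^+ 2 = 1) ->
  Omat cg sg k *m castmx (addn1 k, erefl k) Tt
    = castmx (addn1 k, erefl k) (col_mx R (0 : 'M[C]_(1, k))) ->
  upper_tri R ->
  R \in unitmx ->
  let xt := x - (nu * alpha * sg k) *: (Q *m U *m invmx R *m elast C k) in
  krylov D b k xt /\
  (forall y, krylov D b k y -> norm2 (b - D *m xt) <= norm2 (b - D *m y)) /\
  (forall y, krylov D b k y -> norm2 (b - D *m y) <= norm2 (b - D *m xt) -> y = xt).
Proof.
case: k z R => // k z R.
move=> V_unitary _ _ b_nz _ [ls_nz dotV_nz] D Q L U T _ Tz alpha x nu Tt.
move=> rotations O_Tt _ R_unit xt.
have xtE : xt = Q *m (U *m (z - (nu * alpha * sg k.+1) *: (invmx R *m elast C k.+1))).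
  by rewrite /xt /x !mulmxBr !scalemxAr !mulmxA.
have corr := R_mul_corrected O_Tt R_unit Tz.
split; first by rewrite xtE; apply: (xt_krylov sg R b_nz ls_nz Tz).
rewrite xtE -(mulKmx R_unit (_ - _)) corr.
apply: (lsq_unique_minimizer (krylov_QkUk b_nz ls_nz) _ R_unit).
exact: residual_QkUk V_unitary b_nz ls_nz dotV_nz rotations O_Tt.
Qed.
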